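(* Let $G$ be a graph and ${\cal P}=\{{\cal P}(v)\colon v\in V_G\}$ a family where each ${\cal P}(v)$ is a partition of $N_G(v)$. Then $\gamma(G\circ{\cal P})=|V_G|$.
   Context: All graphs are finite and simple. A set $D\subseteq V_G$ is a dominating set of $G$ if every vertex of $V_G-D$ has a neighbor in $D$; $\gamma(G)$ is the minimum cardinality of a dominating set. For a graph $G$ and a family ${\cal P}=\{{\cal P}(v)\colon v\in V_G\}$, where ${\cal P}(v)$ is a partition of $N_G(v)$ into nonempty blocks, the ${\cal P}$-corona $G\circ{\cal P}$ is the graph with vertex set $\{(v,1)\colon v\in V_G\}\cup\bigcup_{v\in V_G}\{(v,A)\colon A\in{\cal P}(v)\}$ and edge set $\bigcup_{v\in V_G}\{(v,1)(v,A)\colon A\in{\cal P}(v)\}\cup\bigcup_{uv\in E_G}\{(v,A)(u,B)\colon u\in A,\ v\in B\}$ (here $A\in{\cal P}(v)$, $B\in{\cal P}(u)$). *)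

From mathcomp Require Import all_boot.
Set Implicit Arguments. Unset Strict Implicit. Unset Printing Implicit Defensive.

Definition simple_graph (T : finType) (e : rel T) : Prop :=
  symmetric e /\ irreflexive e.

Definition nbhd (T : finType) (e : rel T) (v : T) : {set T} := [set u | e v u].

(* A (sub)graph given by a vertex set V : {set U} of an ambient finType U and an
   adjacency relation adj (the graph induced on V). *)
Definition dominating (U : finType) (V : {set U}) (adj : rel U) (D : {set U}) : bool :=
  (D \subset V) && [forall x in V :\: D, exists y in D, adj x y].

(* domination number: minimum cardinality of a dominating set
   (V itself is dominating, so #|V| is a valid initial bound). *)
Definition domination_number (U : finType) (V : {set U}) (adj : rel U) : nat :=
  \big[minn/#|V|]_(D : {set U} | dominating V adj D) #|D|.

(* P-corona.  Vertices live in T * option {set T}: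
   (v, None) encodes (v,1), and (v, Some A) encodes (v,A) with A \in P v. *)
Definition corona_vertices (T : finType) (P : T -> {set {set T}})
  : {set T * option {set T}} :=
  [set x | match x.2 with None => true | Some A => A \in P x.1 end].

Definition corona_adj (T : finType) (e : rel T) : rel (T * option {set T}) :=
  fun x y =>
    match x.2, y.2 with
    | None, None => false
    | None, Some _ => y.1 == x.1
    | Some _, None => y.1 == x.1
    | Some A, Some B => [&& e x.1 y.1, y.1 \in A & x.1 \in B]
    end.

(* The vertices (v,1) dominate the corona, since every (v,A) is adjacent to
   (v,1).  Conversely, (v,1) is adjacent only to the vertices (v,A), so a
   dominating set contains, for every v, some vertex with first coordinate v;
   the first projection thus maps it onto V_G. *)

From mathcomp Require Import all_boot.

Lemma geq_bigmin_cond (I : finType) (x : nat) (P : pred I) (F : I -> nat) j :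
  P j -> \big[minn/x]_(i | P i) F i <= F j.
Proof.
move=> Pj; rewrite unlock /reducebig.
have : j \in index_enum I by rewrite mem_index_enum.
elim: (index_enum I) => [//|a r IHr] /=; rewrite inE => /orP[/eqP <-|/IHr le_r].
  by rewrite Pj geq_minl.
by case: (P a); rewrite ?geq_min ?le_r ?orbT.
Qed.

Section DominationNumber.

Variables (U : finType) (V : {set U}) (adj : rel U).

Lemma dominating_self : dominating V adj V.
Proof. by rewrite /dominating subxx setDv; apply/forall_inP => x; rewrite inE. Qed.

Lemma domination_number_min D :
  dominating V adj D -> domination_number V adj <= #|D|.
Proof. exact: geq_bigmin_cond. Qed.

Lemma domination_number_lb n :
  (forall D, dominating V adj D -> n <= #|D|) -> n <= domination_number V adj.
Proof.
move=> lbD; apply: (big_ind (fun m => n <= m)) => //.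
- exact/lbD/dominating_self.
- by move=> a b le_na le_nb; rewrite leq_min le_na le_nb.
Qed.

End DominationNumber.

Section Corona.

Variables (T : finType) (e : rel T) (P : T -> {set {set T}}).

Definition corona_base : {set T * option {set T}} := [set (v, None) | v : T].

Lemma card_corona_base : #|corona_base| = #|T|.
Proof. by rewrite card_imset ?cardsT // => u v []. Qed.

Lemma corona_base_dominating :
  dominating (corona_vertices P) (corona_adj e) corona_base.
Proof.
apply/andP; split.
  by apply/subsetP => x /imsetP[v _ ->]; rewrite inE.
apply/forall_inP => -[v [A|]] /setDP[_ notin_base].
  by apply/exists_inP; exists (v, None); [apply/imsetP; exists v | rewrite /corona_adj /=].
by case/negP: notin_base; apply/imsetP; exists v.
Qed.

Lemma corona_dominating_fst D :
  dominating (corona_vertices P) (corona_adj e) D -> [set x.1 | x in D] = setT.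
Proof.
case/andP => _ /forall_inP domD; apply/setP => v; rewrite inE.
have [inD | notinD] := boolP ((v, None) \in D); first exact: (imset_f _ inD).
have /domD/exists_inP[[u [B|//]] inD] : (v, None) \in corona_vertices P :\: D.
  by rewrite !inE notinD.
by rewrite /corona_adj /= => /eqP <-; exact: (imset_f _ inD).
Qed.

Lemma card_corona_dominating D :
  dominating (corona_vertices P) (corona_adj e) D -> #|T| <= #|D|.
Proof.
by move/corona_dominating_fst => fstD; rewrite -cardsT -fstD leq_imset_card.
Qed.

End Corona.

Theorem lemma2p11 (T : finType) (e : rel T) (P : T -> {set {set T}}) :
  simple_graph e ->
  (forall v : T, partition (P v) (nbhd e v)) ->
  domination_number (corona_vertices P) (corona_adj e) = #|T|.
Proof.
move=> _ _; apply/eqP; rewrite eqn_leq; apply/andP; split.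
  rewrite -[X in _ <= X](card_corona_base T).
  exact/domination_number_min/corona_base_dominating.
exact/domination_number_lb/card_corona_dominating.
Qed.
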